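(* Let $1 \le d \le n-1$ and set $c_j = \binom{n-1}{d}/\binom{n-1}{d-j}$ for $0 \le j \le d$. Then in $\mathbb{Q}[x_1,\dots,x_{n+d}]$, $$\binom{n}{d}\, x_1\cdots x_d = \sum_{j=0}^{d} (-1)^j c_j \sum_{\substack{J \subseteq \{1,\dots,n+d\},\ |J| = n\\ |J\cap\{1,\dots,d\}| = d-j}} e_n^d(x_J),$$ where $e_n^d(x_J)$ is the elementary symmetric polynomial of degree $d$ in the $n$ variables $x_i$, $i\in J$. Consequently the same identity holds over any field $K$ in which all $c_j$ are defined (e.g. $\mathrm{char}(K)=0$ or $\mathrm{char}(K)>n$). *)

From HB Require Import structures.
From mathcomp Require Import all_boot all_order all_algebra.
From mathcomp Require Import mpoly.
Set Implicit Arguments. Unset Strict Implicit. Unset Printing Implicit Defensive.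
Import GRing.Theory.
Local Open Scope ring_scope.

(* Variables x_1..x_{N} are indexed by 'I_N (x_{i+1} is 'X_i). *)

Definition esymJ (K : fieldType) (N : nat) (k : nat) (J : {set 'I_N}) : {mpoly K[N]} :=
  \sum_(S : {set 'I_N} | (S \subset J) && (#|S| == k)) \prod_(i in S) 'X_i.

Definition cj (K : fieldType) (n d j : nat) : K :=
  ('C(n.-1, d))%:R / ('C(n.-1, d - j))%:R.

Definition identity_holds (K : fieldType) (n d : nat) : Prop :=
  ('C(n, d))%:R *: (\prod_(i : 'I_(n + d) | (i < d)%N) 'X_i : {mpoly K[n + d]})
  = \sum_(j < d.+1)
      ((-1) ^+ j * cj K n d j) *:
        \sum_(J : {set 'I_(n + d)} | (#|J| == n) &&
                 (#|J :&: [set i : 'I_(n + d) | (i < d)%N]| == d - j)%N)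
          esymJ K d J.

(* The coefficient of a squarefree monomial x^S (|S| = d) on the right-hand side
   is a sum over the n-subsets J containing S, i.e. over the d-subsets T = ~J
   avoiding S, and the sign/weight of J only depends on j = |T :&: D|, where
   D = {1..d}.  With m = |D :\: S| this gives
     sum_j (-1)^j c_j C(m, j) C(n - m, d - j),
   which is C(n, d) for m = 0 (i.e. S = D).  For m > 0 the revision identity
   C(n-1, d-j) C(n-1-d+j, m-1) = C(n-1, m-1) C(n-m, d-j) turns it into a multiple
   of sum_j (-1)^j C(m, j) C(n-1-d+j, m-1), an m-th finite difference of a
   polynomial of degree m - 1 in j, hence 0. *)

From HB Require Import structures.
From mathcomp Require Import all_boot all_order all_algebra.
From mathcomp Require Import mpoly zify ring.
Set Implicit Arguments. Unset Strict Implicit. Unset Printing Implicit Defensive.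
Import GRing.Theory.
Local Open Scope ring_scope.

Lemma ffactD (N a b : nat) : (N ^_ (a + b) = N ^_ a * (N - a) ^_ b)%N.
Proof.
elim: b => [|b IH]; first by rewrite addn0 ffactn0 muln1.
by rewrite addnS !ffactnSr IH subnDA mulnA.
Qed.

Lemma mul_bin_subC (N a b : nat) :
  ('C(N, a) * 'C(N - a, b) = 'C(N, b) * 'C(N - b, a))%N.
Proof.
have ffact_ab (x y : nat) : ('C(N, x) * 'C(N - x, y) * (x`! * y`!) = N ^_ (x + y))%N.
  by rewrite ffactD -!bin_ffact; ring.
apply/eqP; rewrite -(@eqn_pmul2r (a`! * b`!)) ?muln_gt0 ?fact_gt0 //.
by rewrite ffact_ab [(a`! * _)%N]mulnC ffact_ab addnC.
Qed.

Section AlternatingSum.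
Variable R : pzRingType.

(* Summing over any range M > m (the extra terms vanish) lets the Pascal
   recurrences in m and in a be stated on a common range. *)
Let alt (M m a k : nat) : R :=
  \sum_(j < M) (-1) ^+ j * ('C(m, j) * 'C(a + j, k))%:R.

Let alt_widen M m a k : (m < M)%N -> alt M.+1 m a k = alt M m a k.
Proof. by move=> ltmM; rewrite /alt big_ord_recr /= bin_small // mul0n mulr0 addr0. Qed.

Let alt_binS M m a k : alt M.+1 m.+1 a k = alt M.+1 m a k - alt M m a.+1 k.
Proof.
rewrite /alt big_ord_recl [X in _ = X - _]big_ord_recl /= !bin0.
under eq_bigr => i _ do rewrite binS mulnDl natrD mulrDr.
rewrite big_split /= addrA -sumrN; congr (_ + _).
by apply: eq_bigr => i _; rewrite /bump /= exprS addnS addSn mulN1r mulNr.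
Qed.

Let alt_pascal M m a k : alt M m a.+1 k.+1 = alt M m a k.+1 + alt M m a k.
Proof.
rewrite /alt -big_split /=; apply: eq_bigr => i _.
by rewrite addSn binS mulnDr natrD mulrDr.
Qed.

Lemma alternating_binom_sum (M m a k : nat) : (m < M)%N -> (k < m)%N ->
  \sum_(j < M) (-1) ^+ j * ('C(m, j) * 'C(a + j, k))%:R = 0 :> R.
Proof.
rewrite -/(alt M m a k); elim: m M a k => [//|m IH] [//|M] a k ltmM ltkm.
rewrite alt_binS alt_widen //; case: k ltkm => [_|k ltkm].
  suff -> : alt M m a.+1 0 = alt M m a 0 by rewrite subrr.
  by apply: eq_bigr => j _; rewrite !bin0.
by rewrite alt_pascal (IH M a k) // addr0 subrr.
Qed.

End AlternatingSum.

Section WeightedBinomialSum.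
Variables (K : fieldType) (n d : nat).
Hypothesis lt_dn : (d < n)%N.
Hypothesis binK : forall k, (k <= d)%N -> 'C(n.-1, k)%:R != 0 :> K.

Lemma cjK (j : nat) : (j <= d)%N -> cj K n d j * 'C(n.-1, d - j)%:R = 'C(n.-1, d)%:R.
Proof. by move=> lejd; rewrite divfK // binK ?leq_subr. Qed.

Lemma sum_cj_binom_diag :
  \sum_(j < d.+1) ((-1) ^+ j * cj K n d j) *+ ('C(0, j) * 'C(n, d - j)) = 'C(n, d)%:R.
Proof.
rewrite big_ord_recl big1 => [|j _]; last by rewrite bin0n mul0n mulr0n.
by rewrite addr0 /= expr0 mul1r /cj !subn0 divff ?binK // bin0 mul1n.
Qed.

Lemma sum_cj_binom_eq0 (m : nat) : (0 < m <= d)%N ->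
  \sum_(j < d.+1) ((-1) ^+ j * cj K n d j) *+ ('C(m, j) * 'C(n - m, d - j)) = 0.
Proof.
case/andP=> m_gt0 lemd.
have binP : 'C(n.-1, m.-1)%:R != 0 :> K by apply: binK; lia.
apply: (mulIf binP); rewrite mul0r mulr_suml.
transitivity ('C(n.-1, d)%:R *
    \sum_(j < d.+1) (-1) ^+ j * ('C(m, j) * 'C(n.-1 - d + j, m.-1))%:R : K); last first.
  by rewrite (@alternating_binom_sum K) ?mulr0 ?ltnS ?prednK.
rewrite mulr_sumr.
apply: eq_bigr => j _; have lejd : (j <= d)%N by rewrite -ltnS.
have : ('C(n - m, d - j) * 'C(n.-1, m.-1) = 'C(n.-1, d - j) * 'C(n.-1 - d + j, m.-1))%N.
  have e1 : (n.-1 - (d - j) = n.-1 - d + j)%N by lia.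
  have e2 : (n.-1 - m.-1 = n - m)%N by lia.
  by rewrite mulnC -e2 -mul_bin_subC e1.
move/(congr1 (fun x : nat => x%:R : K)); rewrite !natrM => key.
rewrite -(cjK lejd) -mulr_natr !natrM.
transitivity ((-1) ^+ j * cj K n d j * 'C(m, j)%:R * ('C(n - m, d - j)%:R * 'C(n.-1, m.-1)%:R)).
  by ring.
by rewrite key; ring.
Qed.

End WeightedBinomialSum.

Lemma sum_supsets_setC (V : nmodType) (T : finType) (S : {set T}) (n k : nat)
    (f : {set T} -> V) : (n + k)%N = #|T| ->
  \sum_(J : {set T} | (#|J| == n) && (S \subset J)) f (~: J)
  = \sum_(X : {set T} | (X \subset ~: S) && (#|X| == k)) f X.
Proof.
move=> card_T; rewrite (reindex_inj (@setC_inj T)); apply: eq_big => [X|X _]; last by rewrite setCK.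
rewrite subsetC andbC; congr (_ && _).
rewrite -(eqn_add2r #|X|) addnC cardsC -card_T.
by rewrite eqn_add2l eq_sym.
Qed.

Lemma card_set_ltn (N d : nat) : (d <= N)%N -> #|[set i : 'I_N | (i < d)%N]| = d.
Proof.
move=> ledN; have widen_inj : injective (widen_ord ledN).
  by move=> i j /(congr1 val) eq_ij; apply/val_inj.
rewrite -[RHS](card_ord d) -(card_imset _ widen_inj).
apply: eq_card => i; rewrite inE; apply/idP/imsetP => [ltid|[j _ ->]]; last exact: ltn_ord j.
by exists (Ordinal ltid) => //; apply/val_inj.
Qed.

Lemma card_subsets_meet (T : finType) (U D : {set T}) (k j : nat) : (j <= k)%N ->
  #|[set X : {set T} | [&& X \subset U, #|X| == k & #|X :&: D| == j]]|
  = ('C(#|U :&: D|, j) * 'C(#|U :\: D|, k - j))%N.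
Proof.
move=> lejk; rewrite -!cards_draws -cardsX.
set S := [set X | _]; rewrite -(card_imset S (f := fun X => (X :&: D, X :\: D))); last first.
  by move=> X Y [eqI eqD]; rewrite -(setID X D) -(setID Y D) eqI eqD.
congr #|pred_of_set _|; apply/setP => -[A B]; rewrite !inE /=.
apply/imsetP/andP => [[X] | [/andP[sAUD /eqP cA] /andP[sBUD /eqP cB]]].
  rewrite inE => /and3P[sXU /eqP cX /eqP cXD] [-> ->].
  rewrite !setSI ?setSD // cXD eqxx; split => //=.
  by rewrite -cX -(cardsID D X) cXD addKn.
have sAD : A \subset D by apply: subset_trans sAUD (subsetIr _ _).
have AD : A :&: D = A by apply/setIidPl.
have BD : B :&: D = set0.
  apply/setP => x; rewrite !inE; apply/andP => -[/(subsetP sBUD)].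
  by rewrite !inE => /andP[/negbTE ->].
exists (A :|: B).
  rewrite inE subUset (subset_trans sAUD (subsetIl _ _)) (subset_trans sBUD (subsetDl _ _)) /=.
  rewrite setIUl AD BD setU0 cA eqxx andbT.
  have AB : A :&: B = set0 by rewrite -AD -setIA (setIC D) BD setI0.
  by rewrite cardsU AB cards0 subn0 cA cB subnKC.
rewrite setIUl AD BD setU0 setDUl; congr (_, _).
have /eqP -> : A :\: D == set0 by rewrite setD_eq0.
rewrite set0U; apply/setP => x; rewrite !inE andbC; case: (boolP (x \in B)) => //=.
by move/(subsetP sBUD); rewrite !inE => /andP[].
Qed.

Lemma sum_subsets_by_meet (V : nmodType) (T : finType) (U D : {set T}) (k : nat)
    (h : nat -> V) :
  \sum_(X : {set T} | (X \subset U) && (#|X| == k)) h #|X :&: D|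
  = \sum_(j < k.+1) h j *+ ('C(#|U :&: D|, j) * 'C(#|U :\: D|, k - j)).
Proof.
transitivity (\sum_(X : {set T} | (X \subset U) && (#|X| == k))
                \sum_(j < k.+1 | #|X :&: D| == j) h j).
  apply: eq_bigr => X /andP[_ /eqP cX].
  have leXD : (#|X :&: D| < k.+1)%N by rewrite ltnS -cX subset_leq_card ?subsetIl.
  by rewrite (big_pred1 (Ordinal leXD)).
rewrite (exchange_big_dep xpredT) //=; apply: eq_bigr => j _.
rewrite -card_subsets_meet -1?ltnS // -sumr_const; apply: eq_bigl => X.
by rewrite inE andbA.
Qed.

Lemma sum_scale_esymJ (K : fieldType) (N n k : nat) (g : {set 'I_N} -> K) :
  \sum_(J : {set 'I_N} | #|J| == n) g J *: esymJ K k J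
  = \sum_(S : {set 'I_N} | #|S| == k)
      (\sum_(J : {set 'I_N} | (#|J| == n) && (S \subset J)) g J) *: \prod_(i in S) 'X_i.
Proof.
under eq_bigr => J _ do rewrite /esymJ scaler_sumr.
rewrite (exchange_big_dep (fun S : {set 'I_N} => #|S| == k)) => [|J S _ /andP[]//].
apply: eq_bigr => S cS; rewrite scaler_suml; apply: eq_bigl => J.
by rewrite cS !andbT.
Qed.

Section Identity.
Variables (K : fieldType) (n d : nat).
Hypothesis lt_dn : (d < n)%N.
Hypothesis binK : forall k, (k <= d)%N -> 'C(n.-1, k)%:R != 0 :> K.

Let D := [set i : 'I_(n + d) | (i < d)%N].
Let w (j : nat) : K := (-1) ^+ j * cj K n d j.

Let card_D : #|D| = d. Proof. exact/card_set_ltn/leq_addl. Qed.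

Let card_setCI_D (J : {set 'I_(n + d)}) : #|~: J :&: D| = (d - #|J :&: D|)%N.
Proof.
have := cardsID J D; rewrite card_D setDE (setIC D) (setIC D) => cardD.
by rewrite -[X in (X - _)%N]cardD addKn.
Qed.

Lemma identity_rhs_by_complement :
  \sum_(j < d.+1) w j *:
     \sum_(J : {set 'I_(n + d)} | (#|J| == n) && (#|J :&: D| == d - j)%N) esymJ K d J
  = \sum_(J : {set 'I_(n + d)} | #|J| == n) w #|~: J :&: D| *: esymJ K d J.
Proof.
under eq_bigr => j _ do rewrite scaler_sumr.
rewrite (exchange_big_dep (fun J : {set 'I_(n + d)} => #|J| == n)) => [|j J _ /andP[]//].
apply: eq_bigr => J /= cJ; rewrite cJ.
have leJD : (#|J :&: D| <= d)%N by have := subset_leq_card (subsetIr J D); rewrite card_D.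
have ltCJD : (#|~: J :&: D| < d.+1)%N by rewrite card_setCI_D ltnS leq_subr.
rewrite (big_pred1 (Ordinal ltCJD)) // => j /=.
rewrite -val_eqE /= card_setCI_D; have := ltn_ord j; rewrite ltnS => lejd.
by apply/eqP/eqP => ->; rewrite subKn.
Qed.

Lemma identity_rhs_coef (S : {set 'I_(n + d)}) : #|S| = d ->
  \sum_(J : {set 'I_(n + d)} | (#|J| == n) && (S \subset J)) w #|~: J :&: D|
  = if S == D then 'C(n, d)%:R else 0.
Proof.
move=> cS; rewrite (@sum_supsets_setC _ _ S n d (fun X => w #|X :&: D|)); last by rewrite card_ord.
rewrite sum_subsets_by_meet /w.
have cSC : #|~: S :\: D| = (n - #|~: S :&: D|)%N.
  have := cardsC S; rewrite -(cardsID D (~: S)) cS card_ord addnC => /addIn cardSC.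
  by rewrite -[X in (X - _)%N]cardSC addKn.
have leSD : (#|~: S :&: D| <= d)%N by have := subset_leq_card (subsetIr (~: S) D); rewrite card_D.
rewrite cSC; case: eqP => [-> | neSD].
  by rewrite setIC setICr cards0 subn0 (sum_cj_binom_diag binK).
apply: (sum_cj_binom_eq0 lt_dn binK); rewrite leSD andbT lt0n.
apply/eqP => /cards0_eq CSD; apply/neSD/eqP.
by rewrite eq_sym eqEcard cS card_D leqnn andbT -setD_eq0 setDE setIC CSD.
Qed.

Lemma identity_holds_field : identity_holds K n d.
Proof.
rewrite /identity_holds -/D identity_rhs_by_complement sum_scale_esymJ.
under [RHS]eq_bigr => S /eqP cS do rewrite (identity_rhs_coef cS).
rewrite [RHS](bigD1 D) ?card_D //= eqxx [X in _ + X]big1 ?addr0; last first.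
  by move=> S /andP[_ /negbTE ->]; rewrite scale0r.
by congr (_ *: _); apply: eq_bigl => i; rewrite inE.
Qed.

End Identity.

Theorem mainTheorem10 (n d : nat) (hd1 : (1 <= d)%N) (hdn : (d <= n - 1)%N) :
  identity_holds rat n d /\
  (forall K : fieldType,
     (forall j : nat, (j <= d)%N -> ('C(n.-1, d - j))%:R != 0 :> K) ->
     identity_holds K n d).
Proof.
have lt_dn : (d < n)%N by lia.
have field_case (K : fieldType) :
    (forall j : nat, (j <= d)%N -> ('C(n.-1, d - j))%:R != 0 :> K) -> identity_holds K n d.
  move=> binK; apply: identity_holds_field lt_dn _ => k lekd.
  by rewrite -(subKn lekd) binK ?leq_subr.
split=> //; apply: field_case => j _.
by rewrite Num.Theory.pnatr_eq0 -lt0n bin_gt0; lia.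
Qed.
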